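(* Let $n\ge2$, let $A$ be a Hermitian matrix of order $n$ and $\mathcal{O}\in\mathcal{C}_{sg}^{(n)}$. Suppose that $\mathcal{O}\stackrel{\mathsf{p}}{\sim}\mathcal{O}'\stackrel{\mathsf{w}}{\sim}\mathcal{O}''$ or $\mathcal{O}\stackrel{\mathsf{w}}{\sim}\mathcal{O}'\stackrel{\mathsf{p}}{\sim}\mathcal{O}''$ with $\mathcal{O}''\in\mathcal{C}_{sp}^{(n)}$, and that the weak equivalence relation is given by a chain in canonical form containing $d$ shift equivalences. Let $A'$ be obtained from $A$ by applying $d+1$ cycles of the cyclic complex Jacobi method defined by the strategy $I_{\mathcal{O}}$. If all rotation angles satisfy $\phi_k\in[-\pi/4,\pi/4]$, $k\ge0$, then there is a constant $\gamma_n$ depending only on $n$ such that $S^2(A')\le\gamma_nS^2(A)$, $0\le\gamma_n<1$.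
   Context: $\imath=\sqrt{-1}$. For $1\le i<j\le n$ and real $\phi,\alpha$, $R(i,j,\phi,\alpha)$ is the $n\times n$ matrix equal to $I_n$ except for entries $(i,i)=(j,j)=\cos\phi$, $(i,j)=-e^{\imath\alpha}\sin\phi$, $(j,i)=e^{-\imath\alpha}\sin\phi$. $S(X)=\|X-\mathrm{diag}(X)\|_F$. The complex Jacobi method on Hermitian $A$ is $A^{(0)}=A$, $A^{(k+1)}=U_k^*A^{(k)}U_k$, $U_k=R(i_k,j_k,\phi_k,\alpha_k)$, with angles chosen so that entry $(i_k,j_k)$ (hence $(j_k,i_k)$) of $A^{(k+1)}$ is zero. Let $\mathcal{P}_n=\{(r,s):1\le r<s\le n\}$, $N=n(n-1)/2$; an ordering is a sequence listing each element of $\mathcal{P}_n$ exactly once. For an ordering $(i_0,j_0),\dots,(i_{N-1},j_{N-1})$, the cyclic strategy $I_{\mathcal{O}}$ uses $(i_{k\bmod N},j_{k\bmod N})$ as $k$-th pivot pair; a cycle is $N$ consecutive steps. Relations on orderings: an admissible transposition swaps two adjacent pairs with disjoint index sets; $\mathcal{O}\sim\mathcal{O}'$ if one is obtained from the other by finitely many admissible transpositions; $\mathcal{O}\stackrel{\mathsf{s}}{\sim}\mathcal{O}'$ if $\mathcal{O}=[\mathcal{O}_1,\mathcal{O}_2]$, $\mathcal{O}'=[\mathcal{O}_2,\mathcal{O}_1]$ (concatenation); $\mathcal{O}\stackrel{\mathsf{w}}{\sim}\mathcal{O}'$ if there is a chain $\mathcal{O}=\mathcal{O}_0,\dots,\mathcal{O}_r=\mathcal{O}'$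 of orderings whose adjacent terms are $\sim$ or $\stackrel{\mathsf{s}}{\sim}$; the chain is in canonical form if these relations alternate between $\sim$ and $\stackrel{\mathsf{s}}{\sim}$. $\mathcal{O}\stackrel{\mathsf{p}}{\sim}\mathcal{O}'$ if for some permutation $\mathsf{q}$ of $\{1,\dots,n\}$, $\mathcal{O}'$ arises by replacing each pair $(i_k,j_k)$ by the pair with entries $\mathsf{q}(i_k),\mathsf{q}(j_k)$ in increasing order. $\mathcal{C}_c^{(n)}$: orderings $(1,2),(\tau_3(1),3),(\tau_3(2),3),\dots,(\tau_n(1),n),\dots,(\tau_n(n-1),n)$, $\tau_j$ a permutation of $\{1,\dots,j-1\}$; $\mathcal{C}_r^{(n)}$: orderings $(n-1,n),(n-2,\tau_{n-2}(n-1)),(n-2,\tau_{n-2}(n)),\dots,(1,\tau_1(2)),\dots,(1,\tau_1(n))$, $\tau_i$ a permutation of $\{i+1,\dots,n\}$; $\overleftarrow{\mathcal{C}}_c^{(n)},\overleftarrow{\mathcal{C}}_r^{(n)}$ the sets of orderings whose reversed sequences lie in $\mathcal{C}_c^{(n)}$, $\mathcal{C}_r^{(n)}$; $\mathcal{C}_{sp}^{(n)}=\mathcal{C}_c^{(n)}\cup\overleftarrow{\mathcal{C}}_c^{(n)}\cup\mathcal{C}_r^{(n)}\cup\overleftarrow{\mathcal{C}}_r^{(n)}$. $\mathcal{C}_{sg}^{(n)}$ is the set of orderings $\mathcal{O}$ with $\mathcal{O}\stackrel{\mathsf{p}}{\sim}\mathcal{O}'\stackrel{\mathsf{w}}{\sim}\mathcal{O}''$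 or $\mathcal{O}\stackrel{\mathsf{w}}{\sim}\mathcal{O}'\stackrel{\mathsf{p}}{\sim}\mathcal{O}''$ for some ordering $\mathcal{O}'$ and some $\mathcal{O}''\in\mathcal{C}_{sp}^{(n)}$, weak equivalence given in canonical form. *)

From HB Require Import structures.
From mathcomp Require Import all_boot all_order all_algebra all_fingroup.
From mathcomp Require Import complex.
From mathcomp Require Import reals trigo Rstruct.
From Stdlib Require Import Relations.Relation_Operators.
Set Implicit Arguments.
Unset Strict Implicit.
Unset Printing Implicit Defensive.
Import Order.TTheory GRing.Theory Num.Theory.
Local Open Scope ring_scope.

Notation R := Rdefinitions.R.
Notation Cx := (complex R).

Definition expi (a : R) : Cx := (cos a +i* sin a)%C.
Definition abs2 (z : Cx) : R := (complex.Re z) ^+ 2 + (complex.Im z) ^+ 2.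

Definition conjT n (U : 'M[Cx]_n) : 'M[Cx]_n := (map_mx (@conjc R) U)^T.

Definition is_hermitian n (A : 'M[Cx]_n) : Prop :=
  forall i j : 'I_n, A j i = conjc (A i j).

Definition frob n (X : 'M[Cx]_n) : R :=
  Num.sqrt (\sum_(i < n) \sum_(j < n) abs2 (X i j)).

Definition diagpart n (X : 'M[Cx]_n) : 'M[Cx]_n :=
  \matrix_(i < n, j < n) (if i == j then X i i else 0).

Definition Soff n (X : 'M[Cx]_n) : R := frob (X - diagpart X).

Definition rot n (i j : 'I_n) (phi alpha : R) : 'M[Cx]_n :=
  \matrix_(r < n, s < n)
    if ((r == i) && (s == i)) || ((r == j) && (s == j)) then ((cos phi)%:C)%C
    else if (r == i) && (s == j) then - (expi alpha * ((sin phi)%:C)%C)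
    else if (r == j) && (s == i) then expi (- alpha) * ((sin phi)%:C)%C
    else if r == s then 1 else 0.

Definition ppair n := ('I_n * 'I_n)%type.

Definition Pn n : seq (ppair n) :=
  flatten [seq map (fun s : 'I_n => ((r, s) : ppair n)) (filter (fun s : 'I_n => (r < s)%N) (enum 'I_n)) | r <- enum 'I_n].

Definition Npairs n : nat := (n * (n - 1)) %/ 2.

Definition ordering n (O : seq (ppair n)) : Prop := perm_eq O (Pn n).

Definition jacobi_process n (O : seq (ppair n)) (A : 'M[Cx]_n)
  (Ak : nat -> 'M[Cx]_n) (phi alpha : nat -> R) : Prop :=
  Ak 0%N = A /\
  forall (k : nat) (i j : 'I_n), onth O (k %% size O) = Some (i, j) ->
    Ak k.+1 = conjT (rot i j (phi k) (alpha k)) *m Ak k *m rot i j (phi k) (alpha k)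
    /\ Ak k.+1 i j = 0.

Definition disjoint_pairs n (p q : ppair n) : bool :=
  [&& p.1 != q.1, p.1 != q.2, p.2 != q.1 & p.2 != q.2].

Definition adm_transp n (O O' : seq (ppair n)) : Prop :=
  exists (s1 s2 : seq (ppair n)) (p q : ppair n),
    O = s1 ++ p :: q :: s2 /\ O' = s1 ++ q :: p :: s2 /\ disjoint_pairs p q.

Definition equiv_ord n (O O' : seq (ppair n)) : Prop :=
  clos_refl_trans (seq (ppair n)) (@adm_transp n) O O'.

Definition shift_equiv n (O O' : seq (ppair n)) : Prop :=
  exists O1 O2 : seq (ppair n), O = O1 ++ O2 /\ O' = O2 ++ O1.

Fixpoint wchain n (O : seq (ppair n)) (c : seq (bool * seq (ppair n))) : Prop :=
  match c with
  | [::] => True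
  | (b, O1) :: c' =>
      (if b then shift_equiv O O1 else equiv_ord O O1) /\ wchain O1 c'
  end.

(* O ~w O' via a chain in canonical form (labels alternate) containing
   exactly d shift equivalences *)
Definition wequiv_canon n (d : nat) (O O' : seq (ppair n)) : Prop :=
  exists c : seq (bool * seq (ppair n)),
    [/\ wchain O c, last O (map snd c) = O',
        sorted (fun a b : bool => a != b) (map fst c)
      & count fst c = d].

Definition perm_pair n (q : 'S_n) (p : ppair n) : ppair n :=
  if (q p.1 < q p.2)%N then (q p.1, q p.2) else (q p.2, q p.1).

Definition p_equiv n (O O' : seq (ppair n)) : Prop :=
  exists q : 'S_n, O' = map (perm_pair q) O.

(* column-wise: (tau_j(1),j),...,(tau_j(j-1),j) for j = 2..n *)
Definition col_cyclic n (O : seq (ppair n)) : Prop :=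
  exists blk : 'I_n -> seq (ppair n),
    (forall j : 'I_n, perm_eq (blk j) (map (fun i : 'I_n => ((i, j) : ppair n)) (filter (fun i : 'I_n => (i < j)%N) (enum 'I_n))))
    /\ O = flatten [seq blk j | j <- enum 'I_n].

(* row-wise: rows n-1 down to 1, row i : (i,tau_i(i+1)),...,(i,tau_i(n)) *)
Definition row_cyclic n (O : seq (ppair n)) : Prop :=
  exists blk : 'I_n -> seq (ppair n),
    (forall i : 'I_n, perm_eq (blk i) (map (fun j : 'I_n => ((i, j) : ppair n)) (filter (fun j : 'I_n => (i < j)%N) (enum 'I_n))))
    /\ O = flatten [seq blk i | i <- rev (enum 'I_n)].

Definition C_sp n (O : seq (ppair n)) : Prop :=
  col_cyclic O \/ col_cyclic (rev O) \/ row_cyclic O \/ row_cyclic (rev O).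

Definition C_sg n (O : seq (ppair n)) : Prop :=
  ordering O /\
  exists (O' O'' : seq (ppair n)) (d : nat),
    C_sp O'' /\
    ((p_equiv O O' /\ wequiv_canon d O' O'') \/
     (wequiv_canon d O O' /\ p_equiv O' O'')).

From Pilot Require Import Defs.
From mathcomp Require Import all_boot all_order all_algebra all_fingroup.
From mathcomp Require Import complex.
From mathcomp Require Import reals trigo Rstruct.
From mathcomp Require Import ring lra zify.
Import Order.TTheory GRing.Theory Num.Theory.
Set Implicit Arguments.
Unset Strict Implicit.
Unset Printing Implicit Defensive.
Local Open Scope ring_scope.

Local Notation rc x := ((x : R)%:C)%C.

(* A Jacobi step with pivot (i, j) is a unitary similarity acting on rows and
   columns i and j only, so it preserves the Frobenius norm of every principal
   submatrix containing i and j, and lowers S^2 by exactly the mass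
   |a_ij|^2 + |a_ji|^2 that it annihilates.  For a column-cyclic sweep with
   cos^2 phi >= 1/2, an induction on the leading principal submatrices bounds
   S^2 at the start of the sweep by K_n times the pivot mass before and after
   each rotation.  That mass is unchanged when the sweep is run backwards, so
   the bound also holds for reversed orderings, and the relabelling
   i -> n-1-i turns row-cyclic orderings into column-cyclic ones: one sweep
   along an ordering of C_sp multiplies S^2 by at most K_n / (K_n + 1).
   Admissible transpositions swap commuting rotations, a permutation
   equivalence is a relabelling of rows and columns, and a shift equivalence
   costs one sweep, since the partial sweeps at both ends do not increase S.
   Hence d + 1 sweeps along O contain a sweep along O'' up to these moves. *)

Lemma abs2E (z : Cx) : rc (abs2 z) = z * conjc z.
Proof.
case: z => a b; rewrite /abs2 /=; apply/eqP; rewrite eq_complex /=.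
by apply/andP; split; apply/eqP; ring.
Qed.

Lemma abs2_ge0 (z : Cx) : 0 <= abs2 z.
Proof. by rewrite addr_ge0 ?sqr_ge0. Qed.

Lemma abs2M (x y : Cx) : abs2 (x * y) = abs2 x * abs2 y.
Proof. by case: x => a b; case: y => c d; rewrite /abs2 /=; ring. Qed.

Lemma abs2D_le (x y : Cx) : abs2 (x + y) <= 2 * abs2 x + 2 * abs2 y.
Proof.
case: x => a b; case: y => c d; rewrite /abs2 /=.
have := sqr_ge0 (a - c); have := sqr_ge0 (b - d); nra.
Qed.

Lemma abs2_conj (x : Cx) : abs2 (conjc x) = abs2 x.
Proof. by case: x => a b; rewrite /abs2 /=; ring. Qed.

Lemma abs20 : abs2 0 = 0.
Proof. by rewrite /abs2 /= expr0n addr0. Qed.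

Lemma abs2_real (x : R) : abs2 (rc x) = x ^+ 2.
Proof. by rewrite /abs2 /= expr0n addr0. Qed.

Lemma abs2_expi (a : R) : abs2 (expi a) = 1.
Proof. exact: cos2Dsin2. Qed.

Lemma conjc_expi (a : R) : conjc (expi a) = expi (- a).
Proof. by rewrite /expi /= cosN sinN. Qed.

Lemma conjcM (x y : Cx) : conjc (x * y) = conjc x * conjc y.
Proof. exact: rmorphM. Qed.

Lemma conjcN (x : Cx) : conjc (- x) = - conjc x.
Proof. exact: rmorphN. Qed.

Lemma real_complexN (x : R) : rc (- x) = - rc x.
Proof. exact: rmorphN. Qed.

Lemma expi_mulN (a : R) : expi a * expi (- a) = 1.
Proof.
rewrite /expi cosN sinN; apply/eqP; rewrite eq_complex /=.
by apply/andP; split; apply/eqP; [have := cos2Dsin2 a; lra | ring].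
Qed.

Lemma abs2_unitary2 (a b e f : Cx) (c s : R) :
  c ^+ 2 + s ^+ 2 = 1 -> conjc e = f -> e * f = 1 ->
  abs2 (a * rc c + b * (f * rc s)) + abs2 (a * - (e * rc s) + b * rc c) =
  abs2 a + abs2 b.
Proof.
move=> cs ef1 ef; have fe1 : conjc f = e by rewrite -ef1 conjcK.
apply: (@complexI R); rewrite !(rmorphD _ (abs2 _)) /= !abs2E.
rewrite !(rmorphD, rmorphM, rmorphN) /= ef1 fe1 oppr0 !complexr0.
have cs' : rc c * rc c + rc s * rc s = 1 by rewrite -!rmorphM -rmorphD -!expr2 cs.
apply/eqP; rewrite -subr_eq0; apply/eqP.
transitivity ((rc c * rc c + rc s * rc s - 1) * (a * conjc a + b * conjc b)
   + rc s * rc s * (e * f - 1) * (a * conjc a + b * conjc b)); first ring.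
by rewrite cs' ef !subrr; ring.
Qed.

Lemma conjTE n (Q : 'M[Cx]_n) r s : conjT Q r s = conjc (Q s r).
Proof. by rewrite !mxE. Qed.

Lemma conjTM n (A B : 'M[Cx]_n) : conjT (A *m B) = conjT B *m conjT A.
Proof.
apply/matrixP => r s; rewrite conjTE !mxE rmorph_sum; apply: eq_bigr => k _.
by rewrite rmorphM !conjTE mulrC.
Qed.

Lemma conjTK n : involutive (@conjT n).
Proof. by move=> A; apply/matrixP => r s; rewrite !conjTE conjcK. Qed.

Lemma hermitianP n (X : 'M[Cx]_n) : is_hermitian X <-> conjT X = X.
Proof.
split=> [hX|eX r s]; first by apply/matrixP => r s; rewrite conjTE hX conjcK.
by rewrite -{1}eX conjTE.
Qed.

Lemma hermitian_congr n (U X : 'M[Cx]_n) :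
  is_hermitian X -> is_hermitian (conjT U *m X *m U).
Proof.
by move/hermitianP=> eX; apply/hermitianP; rewrite !conjTM conjTK eX mulmxA.
Qed.

Definition in_pair n (i j r : 'I_n) := (r == i) || (r == j).

Definition id_outside n (i j : 'I_n) (Q : 'M[Cx]_n) :=
  forall r s, ~~ (in_pair i j r && in_pair i j s) -> Q r s = (r == s)%:R.

Lemma in_pair_l {n} {i j : 'I_n} : in_pair i j i.
Proof. by rewrite /in_pair eqxx. Qed.

Lemma in_pair_r {n} {i j : 'I_n} : in_pair i j j.
Proof. by rewrite /in_pair eqxx orbT. Qed.

Section PairBlock.
Variables (n : nat) (i j : 'I_n).
Hypothesis ij : i != j.

Lemma big_pair (V : nmodType) (F : 'I_n -> V) :
  (forall k, ~~ in_pair i j k -> F k = 0) -> \sum_k F k = F i + F j.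
Proof.
move=> F0; rewrite (bigD1 i) //= (bigD1 j) 1?eq_sym //= big1 ?addr0 // => k.
by case/andP=> ki kj; apply: F0; rewrite /in_pair negb_or ki.
Qed.

Lemma bigD2 (V : nmodType) (P : pred 'I_n) (F : 'I_n -> V) : P i -> P j ->
  \sum_(k | P k) F k = F i + F j + \sum_(k | P k && ~~ in_pair i j k) F k.
Proof.
move=> Pi Pj; rewrite (bigD1 i) //= (bigD1 j) /=; last by rewrite Pj eq_sym.
rewrite addrA; congr (_ + _); apply: eq_bigl => k.
by rewrite /in_pair negb_or andbA.
Qed.

Lemma mulmx_id_outside (Q X : 'M[Cx]_n) r s : id_outside i j Q ->
  (X *m Q) r s = if in_pair i j s then X r i * Q i s + X r j * Q j s else X r s.
Proof.
move=> Q1; case: ifP => hs.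
  rewrite mxE; apply: big_pair => k hk.
  have ks : (k == s) = false by apply: contraNF hk => /eqP ->.
  by rewrite Q1 ?(negbTE hk) // ks mulr0.
rewrite -{2}[X]mulmx1 !mxE; apply: eq_bigr => k _.
by rewrite Q1 ?hs ?andbF // mxE.
Qed.

Lemma id_outside_mulmx (Q X : 'M[Cx]_n) r s : id_outside i j Q ->
  (Q *m X) r s = if in_pair i j r then Q r i * X i s + Q r j * X j s else X r s.
Proof.
move=> Q1; case: ifP => hr.
  rewrite mxE; apply: big_pair => k hk.
  have rk : (r == k) = false by apply: contraNF hk => /eqP <-.
  by rewrite Q1 ?(negbTE hk) ?andbF // rk mul0r.
rewrite -{2}[X]mul1mx !mxE; apply: eq_bigr => k _.
by rewrite Q1 ?hr // mxE.
Qed.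

Lemma id_outside_conjT (Q : 'M[Cx]_n) : id_outside i j Q -> id_outside i j (conjT Q).
Proof.
by move=> Q1 r s h; rewrite conjTE Q1 1?andbC // rmorph_nat eq_sym.
Qed.

Lemma id_outsideM (Q1 Q2 : 'M[Cx]_n) :
  id_outside i j Q1 -> id_outside i j Q2 -> id_outside i j (Q1 *m Q2).
Proof.
move=> h1 h2 r s h; rewrite (mulmx_id_outside _ _ _ h2); case: ifP => hs; last first.
  by rewrite h1 // hs andbF.
have hr : ~~ in_pair i j r by move: h; rewrite hs andbT.
have rs : (r == s) = false by apply: contraNF hr => /eqP ->.
have [ri rj] : (r == i) = false /\ (r == j) = false.
  by move: hr; rewrite /in_pair negb_or => /andP[/negbTE-> /negbTE->].
by rewrite !h1 ?rs /in_pair ?ri ?rj //= !mul0r addr0.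
Qed.

Lemma id_outside_eq (Q1 Q2 : 'M[Cx]_n) : id_outside i j Q1 -> id_outside i j Q2 ->
  Q1 i i = Q2 i i -> Q1 i j = Q2 i j -> Q1 j i = Q2 j i -> Q1 j j = Q2 j j ->
  Q1 = Q2.
Proof.
move=> h1 h2 eii eij eji ejj; apply/matrixP => r s.
case h: (in_pair i j r && in_pair i j s); last by rewrite h1 ?h2 ?h.
by case/andP: h => /orP[]/eqP-> /orP[]/eqP->.
Qed.

Section Rotation.
Variables (ph al : R).
Local Notation Rt := (Defs.rot i j ph al).

Lemma rot_id_outside : id_outside i j Rt.
Proof.
move=> r s; rewrite /in_pair mxE.
by case: (r == i); case: (r == j); case: (s == i); case: (s == j) => //=; case: (r == s).
Qed.

Lemma rot_ii : Rt i i = rc (cos ph).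
Proof. by rewrite mxE !eqxx. Qed.
Lemma rot_jj : Rt j j = rc (cos ph).
Proof. by rewrite mxE !eqxx orbT. Qed.
Lemma rot_ij : Rt i j = - (expi al * rc (sin ph)).
Proof. by rewrite mxE !eqxx (negbTE ij) eq_sym (negbTE ij). Qed.
Lemma rot_ji : Rt j i = expi (- al) * rc (sin ph).
Proof. by rewrite mxE !eqxx (negbTE ij) eq_sym (negbTE ij). Qed.

End Rotation.

Lemma rot_conjT ph al : conjT (Defs.rot i j ph al) = Defs.rot i j (- ph) al.
Proof.
apply: id_outside_eq; rewrite ?conjTE.
- exact/id_outside_conjT/rot_id_outside.
- exact: rot_id_outside.
- by rewrite !rot_ii cosN conjc_real.
- by rewrite rot_ji rot_ij conjcM conjc_expi conjc_real sinN real_complexN mulrN !opprK.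
- by rewrite rot_ij rot_ji conjcN conjcM conjc_expi conjc_real sinN real_complexN mulrN.
- by rewrite !rot_jj cosN conjc_real.
Qed.

Lemma rot_unitary ph al : Defs.rot i j ph al *m conjT (Defs.rot i j ph al) = 1%:M.
Proof.
set Q := Defs.rot i j ph al; have Q1 : id_outside i j Q := rot_id_outside ph al.
have diag : rc (cos ph) * rc (cos ph) +
    rc (sin ph) * rc (sin ph) * (expi al * expi (- al)) = 1.
  by rewrite expi_mulN mulr1 -!rmorphM -rmorphD -!expr2 cos2Dsin2.
apply: id_outside_eq.
- exact/id_outsideM/id_outside_conjT.
- by move=> r s _; rewrite mxE.
all: rewrite (mulmx_id_outside _ _ _ (id_outside_conjT Q1)) ?in_pair_l ?in_pair_r.
all: rewrite !conjTE /Q ?rot_ii ?rot_ij ?rot_ji ?rot_jj !mxE ?eqxx ?(negbTE ij)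
       1?eq_sym ?(negbTE ij) ?conjcN ?conjcM ?conjc_expi ?conjc_real ?opprK /=.
- by rewrite -[RHS]diag; ring.
- ring.
- ring.
- by rewrite -[RHS]diag; ring.
Qed.

End PairBlock.

Lemma rot_swap n (i j : 'I_n) ph al :
  i != j -> Defs.rot j i ph al = Defs.rot i j (- ph) (- al).
Proof.
move=> ij; have ji : j != i by rewrite eq_sym.
apply: (@id_outside_eq _ i j).
- by move=> r s h; apply: rot_id_outside; rewrite /in_pair ![(_ == j) || _]orbC.
- exact: rot_id_outside.
- by rewrite (rot_jj j) (rot_ii i) cosN.
- by rewrite (rot_ji ji) (rot_ij ij) sinN real_complexN mulrN opprK.
- by rewrite (rot_ij ji) (rot_ji ij) sinN real_complexN opprK mulrN.
- by rewrite (rot_ii j) (rot_jj i) cosN.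
Qed.

Definition jacobi_step n (p : ppair n) (ph al : R) (X : 'M[Cx]_n) : 'M[Cx]_n :=
  conjT (Defs.rot p.1 p.2 ph al) *m X *m Defs.rot p.1 p.2 ph al.

Definition frob2_on n (P : pred 'I_n) (X : 'M[Cx]_n) : R :=
  \sum_(r | P r) \sum_(s | P s) abs2 (X r s).

Definition off2_on n (P : pred 'I_n) (X : 'M[Cx]_n) : R :=
  \sum_(r | P r) \sum_(s | P s && (s != r)) abs2 (X r s).

Definition pivot2 n (p : ppair n) (X : 'M[Cx]_n) : R :=
  abs2 (X p.1 p.2) + abs2 (X p.2 p.1).

Notation off2 := (off2_on xpredT).

Lemma frob2_onE n (P : pred 'I_n) X :
  frob2_on P X = off2_on P X + \sum_(r | P r) abs2 (X r r).
Proof.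
rewrite -big_split; apply: eq_bigr => r Pr.
by rewrite (bigD1 r) //= addrC.
Qed.

Lemma off2_on_ge0 n (P : pred 'I_n) X : 0 <= off2_on P X.
Proof. by do 2!apply: sumr_ge0 => ? _; apply: abs2_ge0. Qed.

Lemma pivot2_ge0 n (p : ppair n) X : 0 <= pivot2 p X.
Proof. by rewrite addr_ge0 ?abs2_ge0. Qed.

Lemma eq_off2_on n (P Q : pred 'I_n) X : P =1 Q -> off2_on P X = off2_on Q X.
Proof.
move=> PQ; rewrite /off2_on (eq_bigl _ _ PQ); apply: eq_bigr => r _.
by apply: eq_bigl => s; rewrite PQ.
Qed.

Lemma Soff2E n (X : 'M[Cx]_n) : Soff X ^+ 2 = off2 X.
Proof.
rewrite /Soff /frob sqr_sqrtr; last by do 2!apply: sumr_ge0 => ? _; apply: abs2_ge0.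
apply: eq_bigr => r _; rewrite (bigD1 r) //= !mxE eqxx subrr abs20 add0r.
by apply: eq_bigr => s sr; rewrite !mxE eq_sym (negbTE sr) subr0.
Qed.

Section JacobiStep.
Variables (n : nat) (i j : 'I_n).
Hypothesis ij : i != j.
Variables (ph al : R) (X : 'M[Cx]_n).
Local Notation Q := (Defs.rot i j ph al).
Local Notation W := (conjT Q *m X).
Local Notation Z := (jacobi_step (i, j) ph al X).

Lemma half_stepE r s : W r s =
  if in_pair i j r then conjT Q r i * X i s + conjT Q r j * X j s else X r s.
Proof. exact/id_outside_mulmx/id_outside_conjT/rot_id_outside. Qed.

Lemma jacobi_stepE r s : Z r s =
  if in_pair i j s then W r i * Q i s + W r j * Q j s else W r s.
Proof. exact/mulmx_id_outside/rot_id_outside. Qed.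

Lemma jacobi_step_out r s : ~~ in_pair i j r -> ~~ in_pair i j s -> Z r s = X r s.
Proof. by move=> hr hs; rewrite jacobi_stepE (negbTE hs) half_stepE (negbTE hr). Qed.

Lemma jacobi_step_col r : ~~ in_pair i j r -> Z r j = X r i * Q i j + X r j * Q j j.
Proof. by move=> hr; rewrite jacobi_stepE in_pair_r !half_stepE (negbTE hr). Qed.

Lemma row_norm_step (P : pred 'I_n) r : P i -> P j ->
  \sum_(s | P s) abs2 (Z r s) = \sum_(s | P s) abs2 (W r s).
Proof.
move=> Pi Pj; rewrite (bigD2 ij _ Pi Pj) [RHS](bigD2 ij _ Pi Pj); congr (_ + _).
  rewrite !jacobi_stepE in_pair_l in_pair_r rot_ii rot_jj rot_ij // rot_ji //.
  by apply: abs2_unitary2; [exact: cos2Dsin2 | exact: conjc_expi | exact: expi_mulN].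
by apply: eq_bigr => s /andP[_ hs]; rewrite jacobi_stepE (negbTE hs).
Qed.

Lemma col_norm_half_step (P : pred 'I_n) s : P i -> P j ->
  \sum_(r | P r) abs2 (W r s) = \sum_(r | P r) abs2 (X r s).
Proof.
move=> Pi Pj; rewrite (bigD2 ij _ Pi Pj) [RHS](bigD2 ij _ Pi Pj); congr (_ + _).
  rewrite !half_stepE in_pair_l in_pair_r !conjTE rot_ii rot_jj rot_ij // rot_ji //.
  rewrite conjcN !conjcM !conjc_real !conjc_expi opprK.
  rewrite [_ * X i s]mulrC [_ * X j s]mulrC [_ * X i s]mulrC [_ * X j s]mulrC.
  apply: abs2_unitary2; [exact: cos2Dsin2 | by rewrite conjc_expi opprK |].
  by rewrite mulrC expi_mulN.
by apply: eq_bigr => r /andP[_ hr]; rewrite half_stepE (negbTE hr).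
Qed.

Lemma frob2_on_step (P : pred 'I_n) : P i -> P j -> frob2_on P Z = frob2_on P X.
Proof.
move=> Pi Pj; rewrite /frob2_on.
under eq_bigr => r _ do rewrite (row_norm_step _ Pi Pj).
rewrite exchange_big [RHS]exchange_big /=.
by apply: eq_bigr => s _; apply: col_norm_half_step.
Qed.

Lemma frob2_on_pair (Y : 'M[Cx]_n) :
  frob2_on (in_pair i j) Y = abs2 (Y i i) + abs2 (Y j j) + pivot2 (i, j) Y.
Proof.
have nopair F : \sum_(k | in_pair i j k && ~~ in_pair i j k) F k = 0 :> R.
  by rewrite big_pred0 // => k; rewrite andbN.
rewrite /frob2_on (bigD2 ij _ in_pair_l in_pair_r) nopair.
rewrite !(bigD2 ij _ in_pair_l in_pair_r) !nopair /pivot2 /=; ring.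
Qed.

Lemma off2_on_step (P : pred 'I_n) : P i -> P j ->
  off2_on P Z = off2_on P X - pivot2 (i, j) X + pivot2 (i, j) Z.
Proof.
move=> Pi Pj; have pairs := frob2_on_step in_pair_l in_pair_r.
have := frob2_on_step Pi Pj; rewrite !frob2_onE (bigD2 ij _ Pi Pj).
rewrite [X in _ = _ + X](bigD2 ij _ Pi Pj).
under eq_bigr => k /andP[_ hk] do rewrite jacobi_step_out //.
move: pairs; rewrite !frob2_on_pair; lra.
Qed.

Lemma col_norm_step (P : pred 'I_n) s : P i -> P j -> ~~ in_pair i j s ->
  \sum_(r | P r) abs2 (Z r s) = \sum_(r | P r) abs2 (X r s).
Proof.
move=> Pi Pj hs; rewrite -(col_norm_half_step _ Pi Pj).
by apply: eq_bigr => r _; rewrite jacobi_stepE (negbTE hs).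
Qed.

Lemma off2_on_step_out (P : pred 'I_n) : (forall r, P r -> ~~ in_pair i j r) ->
  off2_on P Z = off2_on P X.
Proof.
move=> hP; apply: eq_bigr => r Pr; apply: eq_bigr => s /andP[Ps _].
by rewrite jacobi_step_out ?hP.
Qed.

End JacobiStep.

Fixpoint jacobi_run n (ps : seq (ppair n)) (X Y : 'M[Cx]_n) : Prop :=
  if ps is p :: ps' then
    exists ph al, [/\ p.1 != p.2, 1/2 <= cos ph ^+ 2,
      jacobi_step p ph al X p.1 p.2 = 0, jacobi_step p ph al X p.2 p.1 = 0 &
      jacobi_run ps' (jacobi_step p ph al X) Y]
  else Y = X.

(* The weight [L] adds up the pivot mass before and after each rotation, so it
   is unchanged when the path is run backwards with the inverse rotations. *)
Fixpoint rot_path n (ps : seq (ppair n)) (X Y : 'M[Cx]_n) (L : R) : Prop :=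
  if ps is p :: ps' then
    exists ph al L', [/\ p.1 != p.2, 1/2 <= cos ph ^+ 2,
      rot_path ps' (jacobi_step p ph al X) Y L' &
      L = pivot2 p X + pivot2 p (jacobi_step p ph al X) + L']
  else Y = X /\ L = 0.

Lemma jacobi_run_cat n (s1 s2 : seq (ppair n)) X Z :
  jacobi_run (s1 ++ s2) X Z <-> exists Y, jacobi_run s1 X Y /\ jacobi_run s2 Y Z.
Proof.
elim: s1 X => [|p s1 IH] X /=; first by split=> [|[Y [-> //]]]; exists X.
split=> [[ph [al [p12 cph z1 z2 /IH[Y [r1 r2]]]]]|[Y [[ph [al [p12 cph z1 z2 r1]]] r2]]].
  by exists Y; split=> //; exists ph, al.
by exists ph, al; split=> //; apply/IH; exists Y.
Qed.

Lemma rot_path_cat n (s1 s2 : seq (ppair n)) X Z L : rot_path (s1 ++ s2) X Z L ->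
  exists Y L1 L2, [/\ rot_path s1 X Y L1, rot_path s2 Y Z L2 & L = L1 + L2].
Proof.
elim: s1 X L => [|p s1 IH] X L /=; first by exists X, 0, L; rewrite add0r.
case=> ph [al [L' [p12 cph /IH[Y [L1 [L2 [r1 r2 ->]]]] ->]]].
exists Y, (pivot2 p X + pivot2 p (jacobi_step p ph al X) + L1), L2.
by split; [exists ph, al, L1 | | rewrite !addrA].
Qed.

Lemma rot_path_ge0 n (ps : seq (ppair n)) X Y L : rot_path ps X Y L -> 0 <= L.
Proof.
elim: ps X L => [|p ps IH] X L /=; first by case=> _ ->.
case=> ph [al [L' [_ _ /IH L'0 ->]]].
by apply: addr_ge0 => //; apply: addr_ge0; apply: pivot2_ge0.
Qed.

Lemma jacobi_run_hermitian n (ps : seq (ppair n)) X Y :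
  jacobi_run ps X Y -> is_hermitian X -> is_hermitian Y.
Proof.
elim: ps X => [|p ps IH] X /=; first by move->.
by case=> ph [al [_ _ _ _ r]] hX; apply: IH r _; apply: hermitian_congr.
Qed.

Lemma off2_jacobi_step n (p : ppair n) ph al X : p.1 != p.2 ->
  off2 (jacobi_step p ph al X) = off2 X - pivot2 p X + pivot2 p (jacobi_step p ph al X).
Proof. by case: p => i j /= ij; apply: off2_on_step. Qed.

Lemma jacobi_run_rot_path n (ps : seq (ppair n)) X Y : jacobi_run ps X Y ->
  exists L, rot_path ps X Y L /\ off2 Y = off2 X - L.
Proof.
elim: ps X => [|p ps IH] X /=; first by move->; exists 0; rewrite subr0.
case=> ph [al [p12 cph z1 z2 /IH[L [r ->]]]].
have piv0 : pivot2 p (jacobi_step p ph al X) = 0 by rewrite /pivot2 z1 z2 abs20 addr0.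
exists (pivot2 p X + L); split; first by exists ph, al, L; rewrite piv0 addr0.
by rewrite off2_jacobi_step // piv0; lra.
Qed.

Lemma jacobi_run_off2_le n (ps : seq (ppair n)) X Y :
  jacobi_run ps X Y -> off2 Y <= off2 X.
Proof.
by case/jacobi_run_rot_path=> L [/rot_path_ge0 L0 ->]; rewrite lerBlDr lerDl.
Qed.

Lemma jacobi_step_inv n (p : ppair n) ph al X : p.1 != p.2 ->
  jacobi_step p (- ph) al (jacobi_step p ph al X) = X.
Proof.
case: p => i j /= ij; rewrite /jacobi_step /= -(rot_conjT ij) conjTK !mulmxA.
by rewrite (rot_unitary ij) mul1mx -mulmxA (rot_unitary ij) mulmx1.
Qed.

Lemma rev_jacobi_run_rot_path n (ps : seq (ppair n)) X Y :
  jacobi_run (rev ps) X Y -> exists L, rot_path ps Y X L /\ off2 X = off2 Y + L.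
Proof.
elim: ps X Y => [|p ps IH] X Y /=; first by move->; exists 0; rewrite addr0.
rewrite rev_cons -cats1 => /jacobi_run_cat[W [/IH[L [r ->]] /=]].
case=> ph [al [p12 cph z1 z2 ->]].
set W' := jacobi_step p ph al W.
have piv0 : pivot2 p W' = 0 by rewrite /pivot2 z1 z2 abs20 addr0.
exists (pivot2 p W + L); split.
  by exists (- ph), al, L; rewrite jacobi_step_inv // cosN piv0 add0r.
by rewrite off2_jacobi_step // piv0; lra.
Qed.

Lemma disjoint_pairs_sym n (p q : ppair n) : disjoint_pairs p q -> disjoint_pairs q p.
Proof. by case/and4P=> *; apply/and4P; split; rewrite eq_sym. Qed.

Lemma disjoint_pairs_out n (p q : ppair n) k :
  disjoint_pairs p q -> in_pair p.1 p.2 k -> ~~ in_pair q.1 q.2 k.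
Proof.
by case/and4P=> h1 h2 h3 h4 /orP[]/eqP->; rewrite /in_pair negb_or ?h1 ?h2 ?h3 ?h4.
Qed.

Lemma id_outside_disjoint_mul n (p q : ppair n) (Q1 Q2 : 'M[Cx]_n) :
  disjoint_pairs p q -> id_outside p.1 p.2 Q1 -> id_outside q.1 q.2 Q2 ->
  (Q1 - 1%:M) *m (Q2 - 1%:M) = 0.
Proof.
move=> pq h1 h2; apply/matrixP => r s; rewrite !mxE big1 // => k _; rewrite !mxE.
have [kp|kp] := boolP (in_pair p.1 p.2 k).
  by rewrite h2 ?(negbTE (disjoint_pairs_out pq kp)) // [X in _ * X]subrr mulr0.
by rewrite h1 ?(negbTE kp) ?andbF // subrr mul0r.
Qed.

Lemma rot_commute n (p q : ppair n) ph1 al1 ph2 al2 : disjoint_pairs p q ->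
  Defs.rot p.1 p.2 ph1 al1 *m Defs.rot q.1 q.2 ph2 al2 =
  Defs.rot q.1 q.2 ph2 al2 *m Defs.rot p.1 p.2 ph1 al1.
Proof.
move=> pq; set Q1 := Defs.rot p.1 p.2 ph1 al1; set Q2 := Defs.rot q.1 q.2 ph2 al2.
have e12 := id_outside_disjoint_mul pq (rot_id_outside ph1 al1) (rot_id_outside ph2 al2).
have e21 := id_outside_disjoint_mul (disjoint_pairs_sym pq)
              (rot_id_outside ph2 al2) (rot_id_outside ph1 al1).
move: e12 e21; rewrite -/Q1 -/Q2 !mulmxBl !mulmxBr !mulmx1 !mul1mx.
move=> /subr0_eq/eqP; rewrite subr_eq => /eqP->.
move=> /subr0_eq/eqP; rewrite subr_eq => /eqP->.
by rewrite addrAC [in RHS]addrAC [Q2 + Q1]addrC.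
Qed.

Lemma jacobi_step_comm n (p q : ppair n) ph1 al1 ph2 al2 X : disjoint_pairs p q ->
  jacobi_step p ph1 al1 (jacobi_step q ph2 al2 X) =
  jacobi_step q ph2 al2 (jacobi_step p ph1 al1 X).
Proof.
have congr2 (A B Y : 'M[Cx]_n) :
  conjT A *m (conjT B *m Y *m B) *m A = conjT (B *m A) *m Y *m (B *m A).
  by rewrite conjTM !mulmxA.
by move=> pq; rewrite /jacobi_step !congr2 (rot_commute _ _ _ _ pq).
Qed.

Lemma jacobi_run_swap n (p q : ppair n) X Z :
  disjoint_pairs p q -> jacobi_run [:: p; q] X Z -> jacobi_run [:: q; p] X Z.
Proof.
move=> pq [ph1 [al1 [p12 c1 z1 z1' [ph2 [al2 [q12 c2 z2 z2' /= ->]]]]]].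
have out k : in_pair q.1 q.2 k -> ~~ in_pair p.1 p.2 k.
  exact: disjoint_pairs_out (disjoint_pairs_sym pq).
have out' k : in_pair p.1 p.2 k -> ~~ in_pair q.1 q.2 k.
  exact: disjoint_pairs_out pq.
rewrite -(jacobi_step_comm _ _ _ _ _ pq) in z2 z2' *.
exists ph2, al2; split=> //.
- by rewrite -z2 (jacobi_step_out p12) ?out ?in_pair_l ?in_pair_r.
- by rewrite -z2' (jacobi_step_out p12) ?out ?in_pair_l ?in_pair_r.
exists ph1, al1; split=> //; rewrite jacobi_step_comm //.
- by rewrite (jacobi_step_out q12) ?out' ?in_pair_l ?in_pair_r.
- by rewrite (jacobi_step_out q12) ?out' ?in_pair_l ?in_pair_r.
Qed.

Lemma jacobi_run_adm_transp n (O O' : seq (ppair n)) X Y :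
  adm_transp O O' -> jacobi_run O X Y -> jacobi_run O' X Y.
Proof.
case=> s1 [s2 [p [q [-> [-> pq]]]]] /jacobi_run_cat[W [r1]].
move=> /(jacobi_run_cat [:: p; q])[V [r2 r3]].
apply/jacobi_run_cat; exists W; split=> //.
by apply/(jacobi_run_cat [:: q; p]); exists V; split=> //; apply: jacobi_run_swap.
Qed.

Definition sweeps n (O : seq (ppair n)) (k : nat) : seq (ppair n) := flatten (nseq k O).

Lemma sweepsS n (O : seq (ppair n)) k : sweeps O k.+1 = O ++ sweeps O k.
Proof. by []. Qed.

Lemma sweeps1 n (O : seq (ppair n)) : sweeps O 1 = O.
Proof. exact: cats0. Qed.

Lemma jacobi_run_sweeps_equiv n (O O' : seq (ppair n)) k X Y : equiv_ord O O' ->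
  jacobi_run (sweeps O k) X Y -> jacobi_run (sweeps O' k) X Y.
Proof.
move=> eO; elim: eO X Y => [O1 O2 t|//|O1 O2 O3 _ IH12 _ IH23] X Y; last first.
  by move/IH12/IH23.
elim: k X => [//|k IH] X; rewrite !sweepsS => /jacobi_run_cat[W [r1 r2]].
by apply/jacobi_run_cat; exists W; split; [apply: jacobi_run_adm_transp r1 | apply: IH].
Qed.

Lemma sweeps_shift n (O1 O2 : seq (ppair n)) k :
  sweeps (O1 ++ O2) k.+1 = O1 ++ sweeps (O2 ++ O1) k ++ O2.
Proof.
elim: k => [|k IH]; first by rewrite /sweeps /= !cats0.
by rewrite sweepsS IH sweepsS !catA.
Qed.

Definition sweep_contracts n (O : seq (ppair n)) (g : R) : Prop :=
  forall X Y, is_hermitian X -> jacobi_run O X Y -> off2 Y <= g * off2 X.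

Lemma sweep_contracts_shift n (O1 O2 : seq (ppair n)) k g : 0 <= g ->
  sweep_contracts (sweeps (O2 ++ O1) k) g -> sweep_contracts (sweeps (O1 ++ O2) k.+1) g.
Proof.
move=> g0 hc X Y hX; rewrite sweeps_shift.
case/jacobi_run_cat=> X1 [r1 /jacobi_run_cat[Y1 [r2 r3]]].
apply: le_trans (jacobi_run_off2_le r3) _.
apply: le_trans (hc _ _ (jacobi_run_hermitian r1 hX) r2) _.
by rewrite ler_wpM2l // (jacobi_run_off2_le r1).
Qed.

Lemma wchain_sweep_contracts n (g : R) (c : seq (bool * seq (ppair n))) : 0 <= g ->
  forall O m, wchain O c -> (count fst c <= m)%N ->
  sweep_contracts (sweeps (last O (map snd c)) (m - count fst c).+1) g ->
  sweep_contracts (sweeps O m.+1) g.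
Proof.
move=> g0; elim: c => [|[[] O1] c IH] O m /=; first by rewrite subn0.
  case: m => [//|m] [[O2 [O3 [-> ->]]] wc] cm hc.
  exact/sweep_contracts_shift/IH.
by case=> eO wc cm /(IH _ _ wc cm) hc X Y hX /(jacobi_run_sweeps_equiv eO); apply: hc.
Qed.

Lemma wequiv_sweep_contracts n d (O O'' : seq (ppair n)) g : 0 <= g ->
  wequiv_canon d O O'' -> sweep_contracts O'' g -> sweep_contracts (sweeps O d.+1) g.
Proof.
move=> g0 [c [wc <- _ <-]] hc.
by apply: wchain_sweep_contracts wc _ _; rewrite ?subnn ?sweeps1.
Qed.

Section Relabel.
Variables (n : nat) (q : 'S_n).

Definition relabel (X : 'M[Cx]_n) : 'M[Cx]_n :=
  \matrix_(r, s) X ((q^-1)%g r) ((q^-1)%g s).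

Lemma relabelE X i j : relabel X (q i) (q j) = X i j.
Proof. by rewrite mxE !permK. Qed.

Lemma relabelM A B : relabel (A *m B) = relabel A *m relabel B.
Proof.
apply/matrixP => r s; rewrite !mxE (reindex_inj (@perm_inj _ (q^-1)%g)) /=.
by apply: eq_bigr => k _; rewrite !mxE.
Qed.

Lemma relabel_conjT A : relabel (conjT A) = conjT (relabel A).
Proof. by apply/matrixP => r s; rewrite !(mxE, conjTE). Qed.

Lemma relabel_rot i j ph al :
  relabel (Defs.rot i j ph al) = Defs.rot (q i) (q j) ph al.
Proof.
have qVE r k : ((q^-1)%g r == k) = (r == q k).
  by apply/eqP/eqP => [<-|->]; rewrite ?permKV ?permK.
by apply/matrixP => r s; rewrite !mxE !qVE permKV.
Qed.

Lemma off2_relabel X : off2 (relabel X) = off2 X.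
Proof.
rewrite /off2_on (reindex_inj (@perm_inj _ q)); apply: eq_bigr => r _.
rewrite (reindex_inj (@perm_inj _ q)) /=.
under eq_bigl => s do rewrite (inj_eq (@perm_inj _ q)).
by apply: eq_bigr => s _; rewrite relabelE.
Qed.

Lemma hermitian_relabel X : is_hermitian X -> is_hermitian (relabel X).
Proof. by move=> hX r s; rewrite !mxE hX. Qed.

Lemma perm_pair_neq (p : ppair n) :
  p.1 != p.2 -> (perm_pair q p).1 != (perm_pair q p).2.
Proof.
by rewrite /perm_pair; case: ifP => _ /=; rewrite (inj_eq (@perm_inj _ q)) // eq_sym.
Qed.

Lemma relabel_jacobi_step (p : ppair n) ph al X : p.1 != p.2 ->
  exists ph', cos ph' ^+ 2 = cos ph ^+ 2 /\ exists al',
    relabel (jacobi_step p ph al X) = jacobi_step (perm_pair q p) ph' al' (relabel X).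
Proof.
move=> p12; rewrite /jacobi_step !relabelM relabel_conjT relabel_rot /perm_pair.
case: ifP => _ /=; first by exists ph; split=> //; exists al.
exists (- ph); rewrite cosN; split=> //; exists (- al).
by rewrite (rot_swap (i := q p.2) (j := q p.1)) // (inj_eq (@perm_inj _ q)) eq_sym.
Qed.

Lemma jacobi_run_relabel (ps : seq (ppair n)) X Y :
  jacobi_run ps X Y -> jacobi_run (map (perm_pair q) ps) (relabel X) (relabel Y).
Proof.
elim: ps X => [|p ps IH] X /=; first by move->.
case=> ph [al [p12 cph z1 z2 r]].
have [ph' [cph' [al' e]]] := relabel_jacobi_step ph al X p12.
exists ph', al'; rewrite -e cph'; split=> //; last exact: IH.
- exact: perm_pair_neq.
- by rewrite /perm_pair; case: ifP => _ /=; rewrite relabelE ?z1 ?z2.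
- by rewrite /perm_pair; case: ifP => _ /=; rewrite relabelE ?z1 ?z2.
Qed.

End Relabel.

Lemma map_sweeps n (f : ppair n -> ppair n) O k :
  map f (sweeps O k) = sweeps (map f O) k.
Proof. by elim: k => //= k IH; rewrite map_cat IH. Qed.

Lemma p_equiv_sweeps n (O O' : seq (ppair n)) k :
  p_equiv O O' -> p_equiv (sweeps O k) (sweeps O' k).
Proof. by case=> q ->; exists q; rewrite map_sweeps. Qed.

Lemma p_equiv_sweep_contracts n (O O' : seq (ppair n)) g :
  p_equiv O O' -> sweep_contracts O' g -> sweep_contracts O g.
Proof.
case=> q -> hc X Y hX /(jacobi_run_relabel q) r.
by rewrite -(off2_relabel q X) -(off2_relabel q Y); apply: hc r; apply: hermitian_relabel.
Qed.

Lemma ler_sum_subset (V : numDomainType) (I : finType) (P Q : pred I) (F : I -> V) :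
  (forall i, P i -> Q i) -> (forall i, Q i -> 0 <= F i) ->
  \sum_(i | P i) F i <= \sum_(i | Q i) F i.
Proof.
move=> PQ F0; rewrite [leRHS](bigID P) /= (eq_bigl P) => [|i]; last first.
  by apply/andP/idP=> [[]//|Pi]; split=> //; apply: PQ.
by rewrite lerDl sumr_ge0 // => i /andP[Qi _]; apply: F0.
Qed.

Lemma off2_on_subset n (P Q : pred 'I_n) X :
  (forall i, P i -> Q i) -> off2_on P X <= off2_on Q X.
Proof.
move=> PQ; apply: (@le_trans _ _ (\sum_(r | P r) \sum_(s | Q s && (s != r)) abs2 (X r s))).
  apply: ler_sum => r _; apply: ler_sum_subset => [s /andP[/PQ-> ->]//|s _].
  exact: abs2_ge0.
by apply: ler_sum_subset => // r _; apply: sumr_ge0 => s _; apply: abs2_ge0.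
Qed.

Lemma col_sum_le_off2_on n (P Q : pred 'I_n) (j : 'I_n) (X : 'M[Cx]_n) :
  (forall i, P i -> Q i) -> Q j -> ~~ P j ->
  \sum_(r | P r) abs2 (X r j) <= off2_on Q X.
Proof.
move=> PQ Qj Pj.
apply: (@le_trans _ _ (\sum_(r | P r) \sum_(s | Q s && (s != r)) abs2 (X r s))).
  apply: ler_sum => r Pr; rewrite (bigD1 j) /=; last first.
    by rewrite Qj; apply: contraNneq Pj => ->.
  by rewrite lerDl sumr_ge0 // => s _; apply: abs2_ge0.
by apply: ler_sum_subset => // r _; apply: sumr_ge0 => s _; apply: abs2_ge0.
Qed.

(* Each pivot of a column costs the factor 4 of [abs2_col_step_le]; the extra 1
   accounts for the pivot entry itself. *)
Fixpoint phase_const (k : nat) : R := if k is k'.+1 then 4 * phase_const k' + 5 else 0.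

Lemma phase_const_ge0 k : 0 <= phase_const k.
Proof. by elim: k => //= k IH; lra. Qed.

Lemma phase_const_mono : {homo phase_const : k l / (k <= l)%N >-> k <= l}.
Proof.
apply: homo_leq => [//|x y z|k]; first exact: le_trans.
by have := phase_const_ge0 k; rewrite /=; lra.
Qed.

Lemma abs2_col_step_le n (i j : 'I_n) ph al (X : 'M[Cx]_n) r :
  i != j -> 1/2 <= cos ph ^+ 2 -> ~~ in_pair i j r ->
  abs2 (X r j) <= 4 * abs2 (jacobi_step (i, j) ph al X r j) + 4 * abs2 (X r i).
Proof.
move=> ij cph hr; set z := jacobi_step (i, j) ph al X r j.
have ez : X r j * rc (cos ph) = z + X r i * (expi al * rc (sin ph)).
  by rewrite /z (jacobi_step_col ij _ _ _ hr) rot_ij // rot_jj; ring.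
have := abs2D_le z (X r i * (expi al * rc (sin ph))).
rewrite -ez !abs2M abs2_expi !abs2_real mul1r.
have s1 : sin ph ^+ 2 <= 1 by have := cos2Dsin2 ph; have := sqr_ge0 (cos ph); lra.
have := abs2_ge0 (X r j); have := abs2_ge0 (X r i); nra.
Qed.

Lemma rot_path_column n (c : 'I_n) (P : pred 'I_n) (ps : seq (ppair n)) X Y L :
  rot_path ps X Y L -> (forall p, p \in ps -> p.2 = c /\ P p.1) -> ~~ P c ->
  uniq (map fst ps) ->
  \sum_(r <- map fst ps) abs2 (X r c) <=
    phase_const (size ps) * (L + off2_on (fun r => r \in map fst ps) X).
Proof.
elim: ps X L => [|p ps IH] X L /=; first by move=> *; rewrite big_nil mul0r.
case=> ph [al [L' [p12 cph path ->]]] hps Pc /andP[p0U uU].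
have hps' q : q \in ps -> q.2 = c /\ P q.1.
  by move=> qps; apply: hps; rewrite inE qps orbT.
have [pc _] := hps p (mem_head _ _).
case: p pc p12 path p0U {hps} => p0 _ /= -> p12 path p0U.
have := IH _ _ path hps' Pc uU; set U := map fst ps in p0U *.
set X' := jacobi_step (p0, c) ph al X; set C := phase_const (size ps).
have U_out k : k \in U -> ~~ in_pair p0 c k.
  move=> kU; rewrite /in_pair negb_or; apply/andP; split.
    by apply: contraNneq p0U => <-.
  by apply: contraNneq Pc => <-; case/mapP: kU => q /hps'[_ Pq] ->.
rewrite (off2_on_step_out p12) // => IH'.
have S1 : \sum_(k <- U) abs2 (X k c) <=
    4 * \sum_(k <- U) abs2 (X' k c) + 4 * \sum_(k <- U) abs2 (X k p0).
  rewrite !mulr_sumr -big_split /= big_seq [leRHS]big_seq.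
  by apply: ler_sum => k kU; apply: abs2_col_step_le (U_out k kU).
have S3 : \sum_(k <- U) abs2 (X k p0) <= off2_on (fun r => r \in p0 :: U) X.
  rewrite big_uniq //; apply: col_sum_le_off2_on p0U => [k kU|]; last exact: mem_head.
  by rewrite inE; apply/orP; right.
have sub : off2_on (fun r => r \in U) X <= off2_on (fun r => r \in p0 :: U) X.
  by apply: off2_on_subset => k kU; rewrite inE; apply/orP; right.
have piv : abs2 (X p0 c) <= pivot2 (p0, c) X by rewrite lerDl abs2_ge0.
have C0 : 0 <= C := phase_const_ge0 _.
have := ler_wpM2l C0 sub; have := mulr_ge0 C0 (pivot2_ge0 (p0, c) X).
have := mulr_ge0 C0 (pivot2_ge0 (p0, c) X'); have := pivot2_ge0 (p0, c) X'.
have := rot_path_ge0 path; have := off2_on_ge0 (fun r => r \in p0 :: U) X.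
have := pivot2_ge0 (p0, c) X; rewrite big_cons /=; lra.
Qed.

Lemma rot_path_off2_on n (P : pred 'I_n) (ps : seq (ppair n)) X Y L :
  rot_path ps X Y L -> (forall p, p \in ps -> P p.1 /\ P p.2) ->
  off2_on P Y <= off2_on P X + L.
Proof.
elim: ps X L => [|p ps IH] X L /=; first by case=> -> ->; rewrite addr0.
case=> ph [al [L' [p12 _ path ->]]] hps.
have [P1 P2] := hps p (mem_head _ _).
have := IH _ _ path (fun q qps => hps q (mem_behead (qps : q \in behead (p :: ps)))).
case: p p12 P1 P2 {hps path} => i j /= ij Pi Pj.
by rewrite (off2_on_step ij _ _ _ Pi Pj); have := pivot2_ge0 (i, j) X; lra.
Qed.

Lemma rot_path_col_norm n (P : pred 'I_n) (c : 'I_n) (ps : seq (ppair n)) X Y L :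
  rot_path ps X Y L -> (forall p, p \in ps -> P p.1 /\ P p.2) -> ~~ P c ->
  \sum_(r | P r) abs2 (Y r c) = \sum_(r | P r) abs2 (X r c).
Proof.
elim: ps X L => [|p ps IH] X L /=; first by case=> ->.
case=> ph [al [L' [p12 _ path _]]] hps Pc.
have [P1 P2] := hps p (mem_head _ _).
rewrite (IH _ _ path (fun q qps => hps q (mem_behead (qps : q \in behead (p :: ps)))) Pc).
case: p p12 P1 P2 {hps path} => i j /= ij Pi Pj.
apply: col_norm_step => //; rewrite /in_pair negb_or.
by apply/andP; split; apply: contraNneq Pc => ->.
Qed.

Lemma off2_on_predU1 n (P : pred 'I_n) (j : 'I_n) X : ~~ P j -> is_hermitian X ->
  off2_on (predU1 j P) X = off2_on P X + 2 * \sum_(r | P r) abs2 (X r j).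
Proof.
move=> Pj hX; have jP r : P r -> r != j by move=> Pr; apply: contraNneq Pj => <-.
have PU1 r : predU1 j P r && (r != j) = P r.
  by rewrite /= andb_orl andbN /=; apply: andb_idr; apply: jP.
have inner r : P r -> \sum_(s | predU1 j P s && (s != r)) abs2 (X r s) =
    abs2 (X r j) + \sum_(s | P s && (s != r)) abs2 (X r s).
  move=> Pr; rewrite (bigD1 j) /=; last by rewrite eqxx eq_sym jP.
  congr (_ + _); apply: eq_bigl => s.
  by rewrite -andbA [(s != r) && _]andbC andbA PU1.
rewrite /off2_on (bigD1 j) /= ?eqxx // (eq_bigl _ _ PU1) (eq_bigl _ _ PU1).
have row_col : \sum_(s | P s) abs2 (X j s) = \sum_(r | P r) abs2 (X r j).
  by apply: eq_bigr => s _; rewrite hX abs2_conj.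
rewrite (eq_bigr _ inner) row_col.
suff -> : \sum_(r | P r) (abs2 (X r j) + \sum_(s | P s && (s != r)) abs2 (X r s)) =
  \sum_(r | P r) abs2 (X r j) + \sum_(r | P r) \sum_(s | P s && (s != r)) abs2 (X r s).
  by lra.
by rewrite big_split.
Qed.

Definition col_pairs n (j : 'I_n) : seq (ppair n) :=
  map (fun i : 'I_n => ((i, j) : ppair n)) (filter (fun i : 'I_n => (i < j)%N) (enum 'I_n)).

Lemma mem_col_pairs n (j : 'I_n) (p : ppair n) :
  p \in col_pairs j -> p.2 = j /\ (p.1 < j)%N.
Proof. by case/mapP=> i; rewrite mem_filter => /andP[ij _] ->. Qed.

Lemma column_block_bound n (j : 'I_n) (b : seq (ppair n)) (X Y : 'M[Cx]_n) L :
  perm_eq b (col_pairs j) -> rot_path b X Y L ->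
  \sum_(r : 'I_n | (r < j)%N) abs2 (X r j) <=
    phase_const n * (L + off2_on (fun r : 'I_n => (r < j)%N) X).
Proof.
move=> bj path.
have fst_b : perm_eq (map fst b) (filter (fun i : 'I_n => (i < j)%N) (enum 'I_n)).
  by have := perm_map fst bj; rewrite -map_comp map_id.
have mem_fst (r : 'I_n) : (r \in map fst b) = (r < j)%N.
  by rewrite (perm_mem fst_b) mem_filter mem_enum andbT.
have b_pairs p : p \in b -> p.2 = j /\ (p.1 < j)%N.
  by rewrite (perm_mem bj); apply: mem_col_pairs.
have uniq_fst : uniq (map fst b) by rewrite (perm_uniq fst_b) filter_uniq ?enum_uniq.
have := rot_path_column (P := fun r : 'I_n => (r < j)%N) path b_pairs
  (negbT (ltnn j)) uniq_fst.
rewrite big_uniq // (eq_bigl _ _ mem_fst) (eq_off2_on _ mem_fst) => /le_trans; apply.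
apply: ler_wpM2r; first by rewrite addr_ge0 ?off2_on_ge0 ?(rot_path_ge0 path).
apply: phase_const_mono; rewrite (perm_size bj) size_map size_filter.
by apply: leq_trans (count_size _ _) _; rewrite size_enum_ord.
Qed.

Lemma mem_take_enum n m (j : 'I_n) : (j \in take m (enum 'I_n)) = (j < m)%N.
Proof.
rewrite -(mem_map val_inj) map_take val_enum_ord take_iota mem_iota /=.
by rewrite leq_min ltn_ord andbT.
Qed.

Lemma leading_off2_bound n m : (m <= n)%N -> exists K : R, 0 <= K /\
  forall blk : 'I_n -> seq (ppair n), (forall j, perm_eq (blk j) (col_pairs j)) ->
  forall X Y L, is_hermitian X ->
  rot_path (flatten (map blk (take m (enum 'I_n)))) X Y L ->
  off2_on (fun r : 'I_n => (r < m)%N) X <= K * L.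
Proof.
elim: m => [_|m IH mn].
  by exists 0; split=> // *; rewrite /off2_on big_pred0 ?mul0r.
have [K [K0 hK]] := IH (ltnW mn); set C := phase_const n.
have C0 : 0 <= C := phase_const_ge0 n.
exists (K + 2 * C * (K + 1) + 2 * C).
split; first by rewrite !addr_ge0 ?mulr_ge0 // addr_ge0.
move=> blk hblk X Y L hX; pose jm := Ordinal mn.
rewrite (take_nth jm) ?size_enum_ord // (nth_ord_enum jm jm) map_rcons flatten_rcons.
case/rot_path_cat=> X1 [L1 [L2 [path1 path2 ->]]].
have prefix p : p \in flatten (map blk (take m (enum 'I_n))) ->
    (p.1 < m)%N /\ (p.2 < m)%N.
  case/flattenP=> _ /mapP[j jm' ->]; rewrite (perm_mem (hblk j)) => /mem_col_pairs[-> ij].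
  by rewrite mem_take_enum in jm'; split=> //; apply: ltn_trans ij jm'.
have A := hK blk hblk X X1 L1 hX path1.
have B1 := rot_path_off2_on (P := fun r : 'I_n => (r < m)%N) path1 prefix.
have col := rot_path_col_norm (P := fun r : 'I_n => (r < m)%N) (c := jm) path1 prefix
  (negbT (ltnn m)).
have S := column_block_bound (hblk jm) path2; rewrite /= col -/C in S.
have L10 := rot_path_ge0 path1; have L20 := rot_path_ge0 path2.
have := ler_wpM2l C0 B1; have := ler_wpM2l C0 A.
have := mulr_ge0 C0 L10; have := mulr_ge0 C0 L20; have := mulr_ge0 K0 L20.
have := mulr_ge0 (mulr_ge0 C0 K0) L20.
rewrite (eq_off2_on (P := fun r : 'I_n => (r < m.+1)%N)
                    (Q := predU1 jm (fun r : 'I_n => (r < m)%N))); last first.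
  by move=> r; rewrite /= ltnS leq_eqVlt -val_eqE.
rewrite off2_on_predU1 ?ltnn //; lra.
Qed.

Lemma col_cyclic_off2_bound n : exists K : R, 0 <= K /\
  forall (O : seq (ppair n)) X Y L,
  col_cyclic O -> is_hermitian X -> rot_path O X Y L -> off2 X <= K * L.
Proof.
have [K [K0 hK]] := leading_off2_bound (leqnn n).
exists K; split=> // O X Y L [blk [hblk ->]] hX.
have -> : enum 'I_n = take n (enum 'I_n) by rewrite take_oversize ?size_enum_ord.
move=> /(hK blk hblk _ _ _ hX).
by rewrite (eq_off2_on (Q := xpredT)) // => r; rewrite /= ltn_ord.
Qed.

Lemma ler_drop_ratio (F : realFieldType) (K L a b : F) : 0 <= K -> 0 <= L ->
  a = b + L -> a <= K * L \/ b <= K * L -> b <= K / (K + 1) * a.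
Proof.
move=> K0 L0 -> hK; have K1 : 0 < K + 1 by rewrite ltr_wpDl.
rewrite mulrAC ler_pdivlMr //.
by case: hK => h; nra.
Qed.

Lemma cos2_ge_half (ph : R) : - (pi / 4) <= ph <= pi / 4 -> 1/2 <= cos ph ^+ 2.
Proof.
case/andP=> ph_lo ph_hi; have pi2 : pi / 2 = pi / 4 + pi / 4 :> R by field.
have : 0 <= cos (ph *+ 2).
  by apply: cos_ge0_pihalf; rewrite mulr2n pi2; apply/andP; split; lra.
by rewrite cos_mulr2n mulr2n; lra.
Qed.

Lemma col_cyclic_sweep_contracts n : exists g : R, 0 <= g < 1 /\
  forall O : seq (ppair n), col_cyclic O \/ col_cyclic (rev O) -> sweep_contracts O g.
Proof.
have [K [K0 hK]] := col_cyclic_off2_bound n.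
exists (K / (K + 1)); split.
  have K1 : 0 < K + 1 by rewrite ltr_wpDl.
  by rewrite divr_ge0 ?(ltW K1) //= ltr_pdivrMr // mul1r ltrDl.
move=> O [colO|colO] X Y hX run.
  have [L [path ->]] := jacobi_run_rot_path run.
  apply: (ler_drop_ratio K0 (rot_path_ge0 path)); first by rewrite subrK.
  by left; apply: hK colO hX path.
rewrite -(revK O) in run; have [L [path eL]] := rev_jacobi_run_rot_path run.
apply: (ler_drop_ratio K0 (rot_path_ge0 path) eL); right.
exact: hK colO (jacobi_run_hermitian run hX) path.
Qed.

Lemma rev_enum_ord n : rev (enum 'I_n) = map (@rev_ord n) (enum 'I_n).
Proof.
apply: (inj_map val_inj); rewrite map_rev val_enum_ord -map_comp.
rewrite (eq_map (_ : val \o @rev_ord n =1 (fun i => n - i.+1)%N \o val)) //.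
rewrite map_comp val_enum_ord; apply: (@eq_from_nth _ 0%N); rewrite ?size_rev ?size_map //.
move=> i; rewrite size_iota => lt_in.
by rewrite nth_rev ?size_iota // (nth_map 0%N) ?size_iota // !nth_iota //; lia.
Qed.

Definition rev_perm n : 'S_n := perm (@rev_ord_inj n).

Lemma perm_rev_ord_gt n (j : 'I_n) :
  perm_eq (map (@rev_ord n) [seq k : 'I_n <- enum 'I_n | (rev_ord j < k)%N])
          [seq i : 'I_n <- enum 'I_n | (i < j)%N].
Proof.
have enum_uniq' (P : pred 'I_n) : uniq [seq i <- enum 'I_n | P i].
  exact/filter_uniq/enum_uniq.
apply: uniq_perm; rewrite ?(map_inj_uniq rev_ord_inj) ?enum_uniq' // => i.
rewrite -{1}(rev_ordK i) (mem_map rev_ord_inj) !(mem_filter _ _ (enum 'I_n)).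
rewrite !mem_enum !andbT /=.
by have := ltn_ord i; have := ltn_ord j; lia.
Qed.

Lemma row_cyclic_relabel n (O : seq (ppair n)) :
  row_cyclic O -> col_cyclic (map (perm_pair (rev_perm n)) O).
Proof.
case=> blk [hblk ->].
exists (fun j => map (perm_pair (rev_perm n)) (blk (rev_ord j))); split; last first.
  by rewrite map_flatten -map_comp rev_enum_ord -map_comp.
move=> j; apply: perm_trans (perm_map _ (hblk _)) _; rewrite -map_comp.
set s := filter _ _; have -> : map (perm_pair (rev_perm n) \o pair (rev_ord j)) s =
    map (fun i : 'I_n => ((i, j) : ppair n)) (map (@rev_ord n) s).
  rewrite -map_comp; apply/eq_in_map => k; rewrite mem_filter => /andP[jk _].
  rewrite /= /perm_pair /= !permE rev_ordK ifF //; apply/negbTE; rewrite -leqNgt.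
  by move: jk => /=; lia.
exact/perm_map/perm_rev_ord_gt.
Qed.

Lemma C_sp_sweep_contracts n : exists g : R, 0 <= g < 1 /\
  forall O : seq (ppair n), C_sp O -> sweep_contracts O g.
Proof.
have [g [g01 hg]] := col_cyclic_sweep_contracts n; exists g; split=> // O.
have relabelO : p_equiv O (map (perm_pair (rev_perm n)) O) by exists (rev_perm n).
case=> [colO|[colO|[rowO|rowO]]]; [by apply: hg; left | by apply: hg; right | |].
  exact/(p_equiv_sweep_contracts relabelO)/hg/or_introl/row_cyclic_relabel.
apply/(p_equiv_sweep_contracts relabelO)/hg/or_intror.
by rewrite -map_rev; apply: row_cyclic_relabel.
Qed.

Lemma count_ord_gt n (r : 'I_n) :
  count (fun s : 'I_n => (r < s)%N) (enum 'I_n) = (n - r.+1)%N.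
Proof.
rewrite -(count_map val (fun k => r < k)%N) val_enum_ord.
rewrite -[in iota 0 n](subnKC (ltn_ord r)) iotaD count_cat add0n.
have -> : count (fun k => r < k)%N (iota 0 r.+1) = 0%N.
  rewrite (@eq_in_count _ _ pred0) ?count_pred0 // => k.
  by rewrite mem_iota => /andP[_ kr]; apply/negbTE; rewrite -leqNgt.
rewrite (@eq_in_count _ _ predT) ?count_predT ?size_iota // => k.
by rewrite mem_iota => /andP[].
Qed.

Lemma size_Pn n : size (Pn n) = Npairs n.
Proof.
rewrite /Pn size_flatten /shape -map_comp.
under eq_map => r do rewrite /= size_map size_filter count_ord_gt.
have -> : [seq (n - (nat_of_ord r).+1)%N | r <- enum 'I_n] =
    map val (map (@rev_ord n) (enum 'I_n)) by rewrite -[in RHS]map_comp.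
rewrite -rev_enum_ord map_rev sumn_rev val_enum_ord sumnE.
have := bin2_sum n; rewrite /index_iota subn0 => ->.
by rewrite bin2 /Npairs subn1 divn2.
Qed.

Lemma Pn_lt n (p : ppair n) : p \in Pn n -> (p.1 < p.2)%N.
Proof.
by case/flattenP=> _ /mapP[r _ ->] /mapP[s]; rewrite mem_filter => /andP[rs _] ->.
Qed.

Lemma take_onthS (T : Type) (s : seq T) t x :
  onth s t = Some x -> take t.+1 s = rcons (take t s) x.
Proof. by move=> st; rewrite (take_nth x) ?(onth_nth x _ _ _ st) // -onthTE st. Qed.

Lemma sweepsSr n (O : seq (ppair n)) k : sweeps O k.+1 = sweeps O k ++ O.
Proof. by rewrite -addn1 /sweeps nseqD flatten_cat /= cats0. Qed.

Section JacobiProcess.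
Variables (n : nat) (O : seq (ppair n)) (A : 'M[Cx]_n).
Variables (Ak : nat -> 'M[Cx]_n) (phi alpha : nat -> R).
Hypotheses (ordO : ordering O) (proc : jacobi_process O A Ak phi alpha).
Hypothesis cphi : forall k, 1/2 <= cos (phi k) ^+ 2.

Lemma jacobi_process_run t p : is_hermitian (Ak t) ->
  onth O (t %% size O) = Some p -> jacobi_run [:: p] (Ak t) (Ak t.+1).
Proof.
move=> ht Op.
have [e z] : Ak t.+1 = jacobi_step p (phi t) (alpha t) (Ak t) /\ Ak t.+1 p.1 p.2 = 0.
  by case: p Op => i j; case: proc => _; apply.
have p_lt : (p.1 < p.2)%N.
  apply: Pn_lt; rewrite -(perm_mem ordO) -(onth_nth p _ _ _ Op) mem_nth //.
  by rewrite -onthTE Op.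
have ht1 : is_hermitian (Ak t.+1) by rewrite e; apply: hermitian_congr.
exists (phi t), (alpha t); rewrite -e; split=> //; first by rewrite neq_ltn p_lt.
by rewrite ht1 z conjc0.
Qed.

Lemma jacobi_process_sweep k : is_hermitian (Ak (k * size O)) ->
  jacobi_run O (Ak (k * size O)) (Ak (k.+1 * size O)).
Proof.
move=> hk; rewrite mulSn addnC.
suff run t : (t <= size O)%N ->
    jacobi_run (take t O) (Ak (k * size O)) (Ak (k * size O + t)).
  by rewrite -{1}(take_size O); apply: run.
elim: t => [|t IH] lt; first by rewrite take0 addn0.
have [p Op] : exists p, onth O t = Some p.
  by case E: (onth O t) => [p|]; [exists p | move: lt; rewrite -onthTE E].
rewrite (take_onthS Op) -cats1 addnS; apply/jacobi_run_cat.
have run_t := IH (ltnW lt); exists (Ak (k * size O + t)); split=> //.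
apply: jacobi_process_run; first exact: jacobi_run_hermitian run_t hk.
by rewrite modnMDl modn_small.
Qed.

Lemma jacobi_process_sweeps k : is_hermitian A ->
  jacobi_run (sweeps O k) A (Ak (k * size O)).
Proof.
move=> hA; elim: k => [|k IH]; first by case: proc => ->.
rewrite sweepsSr; apply/jacobi_run_cat; exists (Ak (k * size O)); split=> //.
by apply: jacobi_process_sweep; apply: jacobi_run_hermitian IH hA.
Qed.

End JacobiProcess.

Theorem corollary3p7 (n : nat) (hn : (2 <= n)%N) :
  exists gamma : R, 0 <= gamma < 1 /\
  forall (O O' O'' : seq (ppair n)) (d : nat),
    C_sg O ->
    C_sp O'' ->
    ((p_equiv O O' /\ wequiv_canon d O' O'') \/
     (wequiv_canon d O O' /\ p_equiv O' O'')) ->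
    forall (A : 'M[Cx]_n), is_hermitian A ->
    forall (Ak : nat -> 'M[Cx]_n) (phi alpha : nat -> R),
      jacobi_process O A Ak phi alpha ->
      (forall k, - (pi / 4) <= phi k <= pi / 4) ->
      Soff (Ak ((d + 1) * Npairs n)%N) ^+ 2 <= gamma * Soff A ^+ 2.
Proof.
have [g [g01 contracts]] := C_sp_sweep_contracts n.
have g0 : 0 <= g by case/andP: g01.
exists g; split=> // O O' O'' d [ordO _] spO'' rel A hA Ak phi alpha proc hphi.
have cphi k : 1/2 <= cos (phi k) ^+ 2 by apply: cos2_ge_half.
have run := jacobi_process_sweeps ordO proc cphi d.+1 hA.
rewrite !Soff2E addn1 -size_Pn -(perm_size ordO).
suff contractsO : sweep_contracts (sweeps O d.+1) g by apply: contractsO hA run.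
case: rel => [[pO wO'] | [wO pO']].
  apply: p_equiv_sweep_contracts (p_equiv_sweeps _ pO) _.
  exact: wequiv_sweep_contracts g0 wO' (contracts _ spO'').
exact: wequiv_sweep_contracts g0 wO (p_equiv_sweep_contracts pO' (contracts _ spO'')).
Qed.
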